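(* For every $\varepsilon\in(0,1)$ there is an integer $c=\Theta\!\left(\frac{\log(1/\varepsilon)}{\varepsilon}\right)$ such that the following two-round algorithm outputs, for every edge-weighted graph $G(V,E)$ with nonnegative weights and every integer $k\ge c$, a matching $M$ with $(3+\varepsilon)\cdot\mathbb{E}[w(M)]\ge \mathrm{opt}(G)$: (1) form a random $k$-clustering $G^{(1)},\ldots,G^{(k)}$ of $G$ with expected multiplicity $c$; (2) for each $i\in[k]$ compute $M_i:=\mathsf{Greedy}(G^{(i)},\pi)$, where $\pi$ is a fixed ordering of $E$ in non-increasing order of weight (ties broken consistently); (3) on the graph $H$ with vertex set $V$ and edge set $\bigcup_i M_i$, compute $M_G:=\mathsf{Greedy}(H,\pi)$, and output the heavier of $M_G$ and $M_1$.
   Context: $\mathrm{opt}(G)$ is the weight of a maximum weight matching; $w(M)$ is the total weight of $M$. $\mathsf{Greedy}(G,\pi)$ scans the edges of $G$ in the order $\pi$ and adds an edge $(u,v)$ to the matching iff neither endpoint is already matched. A random $k$-clustering with expected multiplicity $c$: independently for each edge $e$, draw $c_e\sim\mathrm{Bin}(k,c/k)$ and place $e$ in $c_e$ distinct uniformly random sets among $E^{(1)},\ldots,E^{(k)}$; $G^{(i)}=G(V,E^{(i)})$. The expectation is over the random clustering. *)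

From HB Require Import structures.
From mathcomp Require Import all_boot all_order all_algebra.
From mathcomp Require Import all_classical all_reals all_analysis.
Set Implicit Arguments. Unset Strict Implicit. Unset Printing Implicit Defensive.
Import Order.TTheory GRing.Theory Num.Theory.
Local Open Scope ring_scope.

Section Defs.
Variable R : realType.
Variable V : finType.

Definition simple_graph (E : {set {set V}}) : bool :=
  [forall e in E, #|e| == 2%N].

Definition is_matching (M : {set {set V}}) : bool :=
  [forall e in M, forall f in M, (e != f) ==> [disjoint e & f]].

Definition weight (w : {set V} -> R) (M : {set {set V}}) : R :=
  \sum_(e in M) w e.

Definition opt (E : {set {set V}}) (w : {set V} -> R) : R :=
  \big[Num.max/0]_(M : {set {set V}} | (M \subset E) && is_matching M) weight w M.

Definition weight_order (E : {set {set V}}) (w : {set V} -> R)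
  (pi : seq {set V}) : bool :=
  perm_eq pi (enum E) && sorted (fun a b => w b <= w a) pi.

Definition greedy_step (M : {set {set V}}) (e : {set V}) : {set {set V}} :=
  if [forall f in M, [disjoint e & f]] then e |: M else M.

Definition Greedy (F : {set {set V}}) (pi : seq {set V}) : {set {set V}} :=
  foldl greedy_step finset.set0 [seq e <- pi | e \in F].

(* A k-clustering is given by f : edge |-> set of indices of clusters containing it;
   E^(i) = edges e with i \in f e. *)
Definition cluster (k : nat) (E : {set {set V}})
  (f : {ffun {set V} -> {set 'I_k}}) (i : 'I_k) : {set {set V}} :=
  [set e in E | i \in f e].

(* Probability of the clustering f under the random k-clustering with expected
   multiplicity c: independently per edge, c_e ~ Bin(k, c/k), then a uniformly
   random c_e-subset of [k]; non-edges are in no cluster. *)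
Definition binom_pmf (k : nat) (p : R) (s : nat) : R :=
  'C(k, s)%:R * p ^+ s * (1 - p) ^+ (k - s).

Definition cluster_prob (k c : nat) (E : {set {set V}})
  (f : {ffun {set V} -> {set 'I_k}}) : R :=
  let p := c%:R / k%:R in
  (\prod_(e in E) (binom_pmf k p #|f e| / 'C(k, #|f e|)%:R))
  * \prod_(e in ~: E) (f e == finset.set0)%:R.

Definition alg_output (k : nat) (E : {set {set V}}) (w : {set V} -> R)
  (pi : seq {set V}) (f : {ffun {set V} -> {set 'I_k}}) : {set {set V}} :=
  let M1 := match (insub 0%N : option 'I_k) with
            | Some i => Greedy (cluster E f i) pi
            | None => finset.set0 end in
  let H := \bigcup_(i < k) Greedy (cluster E f i) pi in
  let MG := Greedy H pi in
  if weight w M1 <= weight w MG then MG else M1.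

Definition expected_weight (k c : nat) (E : {set {set V}}) (w : {set V} -> R)
  (pi : seq {set V}) : R :=
  \sum_(f : {ffun {set V} -> {set 'I_k}})
     cluster_prob c E f * weight w (alg_output E w pi f).

End Defs.

(* Fix a matching [M] and let [G] be the first cluster and [H] the union of the
   greedy matchings of all clusters.  Charging every edge of [M] to a heavier
   greedy edge that blocks it gives
     w(M) <= 2 w(Greedy H) + w(Greedy G) + w(edges of M outside H that are not
             blocked in G),
   where an edge of [Greedy H] is charged at most once per endpoint and an edge
   of [Greedy G] at most once, and the output weighs at least a third of the
   first two terms.  An edge [e] of [M] is in the last set only if no cluster in
   which [e] is unblocked received [e].  Conditioning on the other edges these
   clusters are fixed, say [m] of them; by symmetry [G] is one of them with
   probability [m / k], and [e] avoids all of them with probability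
   [(1 - c/k) ^ m], so the probability is at most [m (1 - c/k) ^ m / k <= 1 / c].
   Hence [(1 - 1/c) w(M) <= 3 E[w(output)]], and [c >= 8 / eps] gives the
   factor [3 + eps]. *)

From Pilot Require Import Defs.
From HB Require Import structures.
From mathcomp Require Import all_boot all_order all_algebra perm.
From mathcomp Require Import all_classical all_reals all_analysis.
(* Re-imported so that [subsetP] and [subset_trans] refer to finite sets again. *)
From mathcomp Require Import fintype finset.
From mathcomp Require Import lra.
Import Order.TTheory GRing.Theory Num.Theory.
Local Open Scope ring_scope.
Set Implicit Arguments. Unset Strict Implicit. Unset Printing Implicit Defensive.

Section GreedyScan.
Variables (V : finType) (pi : seq {set V}).

Local Notation gstep := (@greedy_step V).

Lemma subset_foldl_greedy (M : {set {set V}}) s : M \subset foldl gstep M s.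
Proof.
elim: s M => //= x s IH M; apply: subset_trans (IH (gstep M x)).
by rewrite /greedy_step; case: ifP => _ //; exact: subsetUr.
Qed.

Lemma mem_foldl_greedy (M : {set {set V}}) s x :
  x \in foldl gstep M s -> (x \in M) || (x \in s).
Proof.
elim: s M => /= [|y s IH] M; first by move=> ->.
move/IH; rewrite /greedy_step inE; case: ifP => _; rewrite ?inE;
  by case: (x == y); rewrite ?orbT //= ?orbF.
Qed.

Definition before (e : {set V}) := take (index e pi) pi.

Definition greedy_before (F : {set {set V}}) (e : {set V}) :=
  foldl gstep finset.set0 [seq x <- before e | x \in F].

Definition blocked (F : {set {set V}}) (e : {set V}) :=
  ~~ [forall f in greedy_before F e, [disjoint e & f]].

Lemma blockedP (F : {set {set V}}) e :
  reflect (exists2 f, f \in greedy_before F e & exists2 u, u \in e & u \in f)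
          (blocked F e).
Proof.
apply: (iffP forallPn) => [[f]|[f fG [u ue uf]]].
  rewrite negb_imply -setI_eq0 => /andP[fG /set0Pn[u]].
  by rewrite inE => /andP[ue uf]; exists f => //; exists u.
exists f; rewrite negb_imply fG -setI_eq0; apply/set0Pn; exists u.
by rewrite inE ue uf.
Qed.

Lemma notin_before e : e \notin before e.
Proof.
rewrite /before; case He: (e \in pi); first by rewrite in_take // ltnn.
by apply/negP => /mem_take; rewrite He.
Qed.

Lemma mem_greedy_before F e x :
  x \in greedy_before F e -> (x \in before e) && (x \in F).
Proof. by move/mem_foldl_greedy; rewrite inE /= mem_filter andbC. Qed.

Lemma mem_Greedy_sub F x : x \in Greedy F pi -> (x \in pi) && (x \in F).
Proof. by move/mem_foldl_greedy; rewrite inE /= mem_filter andbC. Qed.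

Lemma greedy_before_sub_Greedy F e : greedy_before F e \subset Greedy F pi.
Proof.
rewrite /Greedy -[X in [seq _ <- X | _]](cat_take_drop (index e pi) pi).
by rewrite filter_cat foldl_cat; exact: subset_foldl_greedy.
Qed.

Lemma eq_greedy_before (F F' : {set {set V}}) e :
  {in before e, F =i F'} -> greedy_before F e = greedy_before F' e.
Proof. by move=> eqF; rewrite /greedy_before; congr foldl; apply: eq_in_filter. Qed.

Lemma greedy_before_cat F g e : g \in before e -> exists s,
  greedy_before F e =
    foldl gstep (foldl gstep (greedy_before F g) [seq x <- [:: g] | x \in F]) s.
Proof.
move=> ge; have gpi : g \in pi by move: ge => /mem_take.
have lt_ge : (index g pi < index e pi)%N by move: ge; rewrite /before in_take.
exists [seq x <- drop (index g pi).+1 (before e) | x \in F].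
rewrite /greedy_before -{1}(cat_take_drop (index g pi).+1 (before e)) filter_cat.
rewrite foldl_cat /before take_takel // (take_nth g) ?index_mem // nth_index //.
by rewrite -cats1 filter_cat foldl_cat.
Qed.

Lemma greedy_before_mono F g e :
  g \in before e -> greedy_before F g \subset greedy_before F e.
Proof.
move=> /(greedy_before_cat F) [s ->]; apply: subset_trans (subset_foldl_greedy _ _).
exact: subset_foldl_greedy.
Qed.

Hypothesis pi_uniq : uniq pi.

Lemma cat_before e : e \in pi -> pi = before e ++ e :: drop (index e pi).+1 pi.
Proof.
move=> epi; rewrite /before -{1}(cat_take_drop (index e pi) pi).
by rewrite (drop_nth e) ?index_mem ?nth_index.
Qed.

Lemma mem_Greedy F e : e \in pi ->
  (e \in Greedy F pi) = (e \in F) && ~~ blocked F e.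
Proof.
move=> epi; have := pi_uniq; rewrite {1}(cat_before epi) cat_uniq /= => /and3P[_ _].
case/andP=> e_after _.
rewrite /Greedy {1}(cat_before epi) filter_cat foldl_cat -/(greedy_before F e) /=.
have e_before : e \notin greedy_before F e.
  by apply/negP => /mem_greedy_before; rewrite (negbTE (notin_before e)).
have notin_rest (M : {set {set V}}) : e \notin M -> e \notin foldl gstep M
    [seq x <- drop (index e pi).+1 pi | x \in F].
  move=> eM; apply/negP => /mem_foldl_greedy /orP[]; first exact/negP.
  by rewrite mem_filter => /andP[_]; apply/negP.
rewrite /blocked negbK; case: (e \in F) => /=; last by apply/negbTE/notin_rest.
rewrite /greedy_step; case: ifP => _; last by apply/negbTE/notin_rest.
by apply: (subsetP (subset_foldl_greedy _ _)); rewrite !inE eqxx.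
Qed.

Lemma mem_greedy_before_Greedy F g e :
  g \in before e -> g \in Greedy F pi -> g \in greedy_before F e.
Proof.
move=> ge; have gpi : g \in pi by move: ge => /mem_take.
rewrite mem_Greedy // => /andP[gF g_free].
have [s ->] := greedy_before_cat F ge; apply: (subsetP (subset_foldl_greedy _ _)).
rewrite /= gF /= /greedy_step; move: g_free; rewrite /blocked negbK => ->.
by rewrite !inE eqxx.
Qed.

End GreedyScan.

Section WeightOrder.
Variables (R : numDomainType) (V : finType) (w : {set V} -> R) (pi : seq {set V}).
Hypothesis pi_sorted : sorted (fun a b => w b <= w a) pi.

Lemma before_weight e f : e \in pi -> f \in before pi e -> w e <= w f.
Proof.
move=> epi fe; have tr : transitive (fun a b => w b <= w a).
  by move=> y x z h1 h2; exact: le_trans h2 h1.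
have sub : subseq [:: f; e] pi.
  rewrite -[pi](cat_take_drop (index e pi)) -cat1s; apply: cat_subseq.
    by rewrite sub1seq.
  by rewrite sub1seq (drop_nth e) ?index_mem // nth_index // mem_head.
by have := subseq_sorted tr sub pi_sorted => /= /andP[].
Qed.

End WeightOrder.

Lemma ler_sum_charge (R : numDomainType) (T U : finType) (P : pred T) (Q : pred U)
    (a : T -> R) (W : U -> R) (r : T -> U -> bool) :
  (forall y, Q y -> 0 <= W y) ->
  (forall x, P x -> exists2 y, Q y && r x y & a x <= W y) ->
  (forall x x' y, P x -> P x' -> Q y -> r x y -> r x' y -> x = x') ->
  \sum_(x | P x) a x <= \sum_(y | Q y) W y.
Proof.
move=> W_ge0 charge charge_inj.
apply: (@le_trans _ _ (\sum_(x | P x) \sum_(y | Q y && r x y) W y)).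
  apply: ler_sum => x Px; have [y /andP[Qy rxy] le_ay] := charge x Px.
  rewrite (bigD1 y) /=; last by rewrite Qy rxy.
  apply: le_trans le_ay _; rewrite lerDl; apply: sumr_ge0 => z /andP[/andP[Qz _] _].
  exact: W_ge0.
rewrite (exchange_big_dep Q) /=; last by move=> x y _ /andP[].
apply: ler_sum => y Qy.
case: (pickP (fun x => P x && r x y)) => [x0 /andP[Px0 r0]|none].
  rewrite (big_pred1 x0) // => x; apply/idP/eqP => [/andP[Px /andP[_ rx]]|->].
    exact: charge_inj Px Px0 Qy rx r0.
  by rewrite Px0 Qy r0.
rewrite big_pred0; first exact: W_ge0.
by move=> x; rewrite Qy /=; apply: none.
Qed.

Lemma not_disjointP (T : finType) (A B : {set T}) :
  reflect (exists2 u, u \in A & u \in B) (~~ [disjoint A & B]).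
Proof.
rewrite -setI_eq0; apply: (iffP (set0Pn _)) => [[u]|[u uA uB]].
  by rewrite inE => /andP[]; exists u.
by exists u; rewrite inE uA uB.
Qed.

Lemma mem_card2 (T : finType) (g : {set T}) u u' z : #|g| = 2%N ->
  u \in g -> u' \in g -> u != u' -> z \in g -> (z == u) || (z == u').
Proof.
move=> /eqP /cards2P [x [y [_ ->]]].
by rewrite !inE => /orP[]/eqP-> /orP[]/eqP-> //; rewrite ?eqxx //;
  move=> _ /orP[]/eqP->; rewrite ?eqxx ?orbT.
Qed.

Lemma matching_edge_eq (T : finType) (M : {set {set T}}) e e' u : is_matching M ->
  e \in M -> e' \in M -> u \in e -> u \in e' -> e = e'.
Proof.
move=> /forallP/(_ e) + eM e'M; rewrite eM /= => /forallP/(_ e').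
by rewrite e'M /=; case: eqVneq => // _ /= dis ue; rewrite (disjointFr dis ue).
Qed.

Section GreedyCharging.
Variables (R : realType) (V : finType) (E : {set {set V}}) (w : {set V} -> R)
  (pi : seq {set V}).
Hypothesis pi_uniq : uniq pi.
Hypothesis pi_mem : pi =i E.
Hypothesis pi_sorted : sorted (fun a b => w b <= w a) pi.
Hypothesis E_simple : simple_graph E.
Hypothesis w_ge0 : forall e, e \in E -> 0 <= w e.

Lemma edge_card2 e : e \in E -> #|e| = 2%N.
Proof. by move=> eE; move/forallP: E_simple => /(_ e); rewrite eE => /eqP. Qed.

Lemma mem_Greedy_E F x : x \in Greedy F pi -> x \in E.
Proof. by move/mem_Greedy_sub; rewrite pi_mem => /andP[]. Qed.

Lemma weight_Greedy_ge0 F : 0 <= weight w (Greedy F pi).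
Proof. by apply: sumr_ge0 => x /mem_Greedy_E /w_ge0. Qed.

Lemma weight_incidences (M : {set {set V}}) : M \subset E ->
  2 * weight w M = \sum_(y | (y.1 \in M) && (y.2 \in y.1)) w y.1.
Proof.
move=> ME; rewrite -(pair_big_dep (mem M) (fun f u => u \in f) (fun f _ => w f)) /=.
rewrite /weight mulr_sumr; apply: eq_bigr => f fM; rewrite sumr_const.
by rewrite edge_card2 ?(subsetP ME) // mulr_natl.
Qed.

Variables (G H Ms : {set {set V}}).
Hypotheses (Ms_sub : Ms \subset E) (Ms_matching : is_matching Ms).

Lemma charge_to_Greedy :
  \sum_(e in Ms | (e \in H) || blocked pi H e) w e <= 2 * weight w (Greedy H pi).
Proof.
have MsE e : e \in Ms -> e \in E by move/(subsetP Ms_sub).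
rewrite weight_incidences; last by apply/subsetP => x /mem_Greedy_E.
apply: (@ler_sum_charge _ _ _ _ _ w (fun y => w y.1) (fun e y => y.2 \in e)).
- by move=> y /andP[/mem_Greedy_E/w_ge0].
- move=> e /andP[eMs eH]; case: (boolP (blocked pi H e)) => [/blockedP|e_free].
    case=> f fG [u ue uf]; exists (f, u).
      rewrite /= uf ue !andbT.
      exact: (subsetP (greedy_before_sub_Greedy pi H e)).
    rewrite /=; apply: (before_weight pi_sorted); first by rewrite pi_mem MsE.
    by case/andP: (mem_greedy_before fG).
  have [u ue] : exists u, u \in e by apply/card_gt0P; rewrite edge_card2 ?MsE.
  exists (e, u) => //=; rewrite ue mem_Greedy ?pi_mem ?MsE // e_free !andbT.
  by move: eH; rewrite (negbTE e_free) orbF.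
- move=> e e' y /andP[eMs _] /andP[e'Ms _] _.
  exact: matching_edge_eq Ms_matching eMs e'Ms.
Qed.

Hypothesis Greedy_G_sub_H : Greedy G pi \subset H.

(* Two matching edges blocked in [G] by the same greedy edge [g] through
   different endpoints would force one of them to be blocked in [H]: either by
   [g] itself, or by the edge that kept [g] out of [Greedy H]. *)
Lemma common_blocker_eq e e' g u u' :
  e \in Ms -> e' \in Ms -> ~~ blocked pi H e -> ~~ blocked pi H e' ->
  g \in greedy_before pi G e -> g \in greedy_before pi G e' ->
  u \in e -> u \in g -> u' \in e' -> u' \in g -> e = e'.
Proof.
move=> eMs e'Ms e_free e'_free gGe gGe' ue ug u'e' u'g.
have [eq_uu'|neq_uu'] := eqVneq u u'.
  by apply: (matching_edge_eq Ms_matching eMs e'Ms ue); rewrite eq_uu'.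
exfalso; have /andP[g_e _] := mem_greedy_before gGe.
have /andP[g_e' _] := mem_greedy_before gGe'.
have gM1 := subsetP (greedy_before_sub_Greedy pi G e) _ gGe.
have gE := mem_Greedy_E gM1.
have [gMG|] := boolP (g \in Greedy H pi).
  move/negP: e_free; apply; apply/blockedP; exists g; last by exists u.
  exact: mem_greedy_before_Greedy.
rewrite mem_Greedy ?pi_mem // (subsetP Greedy_G_sub_H) //= negbK.
case/blockedP=> h hG [z zg zh].
case/orP: (mem_card2 (edge_card2 gE) ug u'g neq_uu' zg) => /eqP z_eq; subst z.
  move/negP: e_free; apply; apply/blockedP; exists h; last by exists u.
  exact: (subsetP (greedy_before_mono H g_e)).
move/negP: e'_free; apply; apply/blockedP; exists h; last by exists u'.
exact: (subsetP (greedy_before_mono H g_e')).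
Qed.

Lemma charge_to_Greedy_sub :
  \sum_(e in Ms | ~~ ((e \in H) || blocked pi H e) && blocked pi G e) w e
    <= weight w (Greedy G pi).
Proof.
have MsE e : e \in Ms -> e \in E by move/(subsetP Ms_sub).
apply: (@ler_sum_charge _ _ _ _ _ w w
          (fun e g => (g \in greedy_before pi G e) && ~~ [disjoint e & g])).
- by move=> g /mem_Greedy_E /w_ge0.
- move=> e /andP[eMs /andP[_ /blockedP[g gG [u ue ug]]]].
  exists g; last first.
    apply: (before_weight pi_sorted); first by rewrite pi_mem MsE.
    by case/andP: (mem_greedy_before gG).
  rewrite (subsetP (greedy_before_sub_Greedy pi G e)) //= gG /=.
  by apply/not_disjointP; exists u.
- move=> e e' g /andP[eMs +] /andP[e'Ms +] _.
  rewrite !negb_or => /andP[/andP[_ e_free] _] /andP[/andP[_ e'_free] _].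
  move=> /andP[gGe /not_disjointP[u ue ug]] /andP[gGe' /not_disjointP[u' u'e' u'g]].
  exact: (common_blocker_eq eMs e'Ms e_free e'_free gGe gGe' ue ug u'e' u'g).
Qed.

Lemma matching_weight_le_Greedy :
  weight w Ms <= 2 * weight w (Greedy H pi) + weight w (Greedy G pi)
     + \sum_(e in Ms) w e * ((e \notin H) && ~~ blocked pi G e)%:R.
Proof.
rewrite /weight (bigID (fun e => (e \in H) || blocked pi H e)) /=.
rewrite [X in _ + X](bigID (blocked pi G)) /= addrA.
apply: lerD; [apply: lerD|].
- exact: charge_to_Greedy.
- by under eq_bigl do rewrite -andbA; exact: charge_to_Greedy_sub.
- under eq_bigl do rewrite -andbA.
  rewrite big_mkcondr; apply: ler_sum => e eMs; case: ifP => [|_].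
    by rewrite negb_or => /andP[/andP[-> _] ->]; rewrite mulr1.
  by apply: mulr_ge0; [exact/w_ge0/(subsetP Ms_sub) | exact: ler0n].
Qed.

End GreedyCharging.

Definition ffun_upd (I J : finType) (g : {ffun I -> J}) (a : I) (j : J) :=
  [ffun i => if i == a then j else g i].

Section ProductMeasure.
Variables (R : numDomainType) (I J : finType) (Phi : I -> J -> R).
Hypothesis Phi_ge0 : forall i j, 0 <= Phi i j.
Hypothesis Phi_sum1 : forall i, \sum_j Phi i j = 1.

Lemma sum_prod_ffun1 : \sum_(f : {ffun I -> J}) \prod_i Phi i (f i) = 1.
Proof. by rewrite -bigA_distr_bigA big1 // => i _; exact: Phi_sum1. Qed.

Variables (a : I) (j0 : J).

Lemma sum_prod_resample (G : {ffun I -> J} -> R) :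
  \sum_(f : {ffun I -> J}) (\prod_i Phi i (f i)) * G f =
  \sum_(g : {ffun I -> J} | g a == j0)
     (\prod_(i | i != a) Phi i (g i)) * \sum_j Phi a j * G (ffun_upd g a j).
Proof.
rewrite (partition_big (fun f : {ffun I -> J} => f a) predT) //=.
transitivity (\sum_j \sum_(g : {ffun I -> J} | g a == j0)
   Phi a j * (\prod_(i | i != a) Phi i (g i)) * G (ffun_upd g a j)).
  apply: eq_bigr => j _.
  rewrite (reindex_onto (fun g => ffun_upd g a j) (fun f => ffun_upd f a j0)) /=.
    apply: eq_big => g.
      rewrite ffunE !eqxx /=; apply/eqP/eqP => [<-|ga]; first by rewrite ffunE eqxx.
      by apply/ffunP => i; rewrite !ffunE; case: eqP => // ->; rewrite ga.
    move=> _; rewrite (bigD1 a) //= ffunE eqxx; congr (_ * _ * _).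
    by apply: eq_bigr => i /negbTE ia; rewrite ffunE ia.
  move=> f /eqP fa; apply/ffunP => i; rewrite !ffunE.
  by case: eqP => // ->; rewrite fa.
rewrite exchange_big /=; apply: eq_bigr => g _; rewrite mulr_sumr.
by apply: eq_bigr => j _; rewrite (mulrC (Phi a j)) -mulrA.
Qed.

Lemma expectation_le_resample (G : {ffun I -> J} -> R) (C : R) :
  (forall g, \sum_j Phi a j * G (ffun_upd g a j) <= C) ->
  \sum_(f : {ffun I -> J}) (\prod_i Phi i (f i)) * G f <= C.
Proof.
move=> G_le; have := sum_prod_resample (fun _ => C).
rewrite -!mulr_suml Phi_sum1 sum_prod_ffun1 !mul1r => ->.
rewrite sum_prod_resample mulr_suml; apply: ler_sum => g _; rewrite ler_wpM2l //.
by apply: prodr_ge0 => i _.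
Qed.

End ProductMeasure.

Lemma geometric_mul_le_inv (R : realFieldType) (p : R) m : 0 < p <= 1 ->
  m%:R * (1 - p) ^+ m <= p^-1.
Proof.
case/andP=> p_gt0 p_le1; have q_ge0 : 0 <= 1 - p by rewrite subr_ge0.
have bernoulli : (1 + m%:R * p) * (1 - p) ^+ m <= 1.
  elim: m => [|m IH]; first by rewrite mul0r addr0 expr0 mulr1.
  apply: le_trans IH; rewrite exprS mulrA ler_wpM2r ?exprn_ge0 //.
  by have := ler0n R m; rewrite -addn1 natrD; nra.
rewrite -(ler_pM2l p_gt0) mulfV ?gt_eqF //; apply: le_trans bernoulli.
by rewrite mulrDl mul1r mulrCA -mulrA lerDr exprn_ge0.
Qed.

Section Relabel.
Variables (V : finType) (E : {set {set V}}) (pi : seq {set V}) (k : nat).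

Local Notation clustering := {ffun {set V} -> {set 'I_k}}.

Definition Greedy_union (f : clustering) :=
  \bigcup_(i < k) Greedy (Defs.cluster E f i) pi.

Definition fperm (s : {perm 'I_k}) (f : clustering) : clustering :=
  [ffun x => s @^-1: f x].

Lemma fpermK s : cancel (fperm s) (fperm s^-1).
Proof. by move=> f; apply/ffunP => x; apply/setP => i; rewrite !ffunE !inE permKV. Qed.

Lemma cluster_fperm s f i : Defs.cluster E (fperm s f) i = Defs.cluster E f (s i).
Proof. by apply/setP => x; rewrite !inE ffunE inE. Qed.

Lemma Greedy_union_fperm s f : Greedy_union (fperm s f) = Greedy_union f.
Proof.
rewrite /Greedy_union; under eq_bigr do rewrite cluster_fperm.
by rewrite [RHS](reindex_inj (@perm_inj _ s)).
Qed.

End Relabel.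

Section ClusterMeasure.
Variables (R : realType) (V : finType) (E : {set {set V}}) (k c : nat).

Local Notation clustering := {ffun {set V} -> {set 'I_k}}.

Let p : R := c%:R / k%:R.

Definition subset_prob (S : {set 'I_k}) : R :=
  \prod_i (if i \in S then p else 1 - p).

Definition edge_law (x : {set V}) (S : {set 'I_k}) : R :=
  if x \in E then subset_prob S else (S == finset.set0)%:R.

Lemma subset_prob_card (S : {set 'I_k}) :
  subset_prob S = p ^+ #|S| * (1 - p) ^+ (k - #|S|).
Proof.
have -> : (k - #|S|)%N = #|~: S| by rewrite [#|~: S|]cardsCs setCK card_ord.
rewrite /subset_prob (bigID (mem S)) /= -!prodr_const.
congr (_ * _); first by apply: eq_bigr => i ->.
by apply: eq_big => [i|i /negbTE ->]; rewrite ?inE.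
Qed.

(* A binomial size followed by a uniform subset of that size is the same as
   including each cluster independently with probability [p]. *)
Lemma binom_pmf_subset_prob (S : {set 'I_k}) :
  binom_pmf k p #|S| / 'C(k, #|S|)%:R = subset_prob S.
Proof.
have C_neq0 : ('C(k, #|S|)%:R : R) != 0.
  by rewrite pnatr_eq0 -lt0n bin_gt0 -[X in (_ <= X)%N](card_ord k) max_card.
by rewrite /binom_pmf subset_prob_card mulrAC [_ * p ^+ _ / _]mulrAC divff // mul1r.
Qed.

Lemma subset_prob_disjoint (F : {set 'I_k}) :
  \sum_S subset_prob S * [disjoint S & F]%:R = (1 - p) ^+ #|F|.
Proof.
transitivity (\sum_(S : {set 'I_k})
   \prod_i (if i \in S then (if i \in F then 0 else p) else 1 - p)).
  apply: eq_bigr => S _; have [SF|/not_disjointP[i iS iF]] := boolP [disjoint S & F].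
    rewrite mulr1; apply: eq_bigr => i _.
    by case: ifP => // iS; rewrite (disjointFr SF iS).
  by rewrite mulr0 (bigD1 i) //= iS iF mul0r.
rewrite -bigA_distr (eq_bigr (fun i => if i \in F then 1 - p else 1)); last first.
  by move=> i _; case: ifP => _ /=; rewrite ?add0r // addrCA subrr addr0.
by rewrite -big_mkcond prodr_const.
Qed.

Lemma subset_prob_sum1 : \sum_S subset_prob S = 1.
Proof.
have := subset_prob_disjoint finset.set0; rewrite cards0 expr0 => <-.
by apply: eq_bigr => S _; rewrite -setI_eq0 setI0 eqxx mulr1.
Qed.

Lemma edge_law_sum1 x : \sum_S edge_law x S = 1.
Proof.
rewrite /edge_law; case: (x \in E); first exact: subset_prob_sum1.
by rewrite (bigD1 (finset.set0 : {set 'I_k})) //= eqxx big1 ?addr0 // => S /negbTE ->.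
Qed.

Lemma edge_law_perm (s : {perm 'I_k}) x (S : {set 'I_k}) :
  edge_law x (s @^-1: S) = edge_law x S.
Proof.
by rewrite /edge_law !subset_prob_card -!cards_eq0 card_preimset //; exact: perm_inj.
Qed.

Lemma cluster_prob_prod (f : clustering) :
  cluster_prob R c E f = \prod_x edge_law x (f x).
Proof.
rewrite /cluster_prob [RHS](bigID (mem E)) /=; congr (_ * _).
  by apply: eq_bigr => x xE; rewrite /edge_law xE binom_pmf_subset_prob.
rewrite (eq_bigl (fun x => x \notin E)) => [|x]; last by rewrite inE.
by apply: eq_bigr => x /negbTE xE; rewrite /edge_law xE.
Qed.

Lemma cluster_prob_sum1 : \sum_(f : clustering) cluster_prob R c E f = 1.
Proof.
under eq_bigr do rewrite cluster_prob_prod.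
exact: (sum_prod_ffun1 edge_law_sum1).
Qed.

Lemma cluster_prob_fperm s (f : clustering) :
  cluster_prob R c E (fperm s f) = cluster_prob R c E f.
Proof.
by rewrite !cluster_prob_prod; apply: eq_bigr => x _; rewrite ffunE edge_law_perm.
Qed.

Hypotheses (c_gt0 : (0 < c)%N) (c_le_k : (c <= k)%N).

Lemma p_itv : 0 < p <= 1.
Proof.
have k_gt0 : (0 < k)%N by apply: leq_trans c_le_k.
by rewrite divr_gt0 ?ltr0n //= ler_pdivrMr ?ltr0n // mul1r ler_nat.
Qed.

Lemma subset_prob_ge0 (S : {set 'I_k}) : 0 <= subset_prob S.
Proof.
have /andP[p_gt0 p_le1] := p_itv.
by apply: prodr_ge0 => i _; case: ifP; rewrite ?subr_ge0 // ltW.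
Qed.

Lemma edge_law_ge0 x S : 0 <= edge_law x S.
Proof. by rewrite /edge_law; case: ifP => _; [exact: subset_prob_ge0 | exact: ler0n]. Qed.

Lemma cluster_prob_ge0 (f : clustering) : 0 <= cluster_prob R c E f.
Proof. by rewrite cluster_prob_prod; apply: prodr_ge0 => x _; exact: edge_law_ge0. Qed.

End ClusterMeasure.

Section BadEdge.
Variables (R : realType) (V : finType) (E : {set {set V}}) (pi : seq {set V}).
Variables (k c : nat) (e : {set V}).
Hypotheses (pi_uniq : uniq pi) (pi_mem : pi =i E).
Hypotheses (c_gt0 : (0 < c)%N) (c_le_k : (c <= k)%N) (eE : e \in E).

Local Notation clustering := {ffun {set V} -> {set 'I_k}}.

Definition free_clusters (f : clustering) :=
  [set j | ~~ blocked pi (Defs.cluster E f j) e].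

Definition bad (f : clustering) (j : 'I_k) :=
  (e \notin Greedy_union E pi f) && ~~ blocked pi (Defs.cluster E f j) e.

Lemma blocked_upd (g : clustering) S j :
  blocked pi (Defs.cluster E (ffun_upd g e S) j) e =
  blocked pi (Defs.cluster E g j) e.
Proof.
rewrite /blocked (@eq_greedy_before _ _ _ (Defs.cluster E g j)) // => x xe.
rewrite !inE ffunE; case: eqP => // x_eq; subst x.
by move: xe; rewrite (negbTE (notin_before pi e)).
Qed.

Lemma free_clusters_upd (g : clustering) S :
  free_clusters (ffun_upd g e S) = free_clusters g.
Proof. by apply/setP => j; rewrite !inE blocked_upd. Qed.

Lemma mem_Greedy_union_upd (g : clustering) S :
  (e \in Greedy_union E pi (ffun_upd g e S)) = ~~ [disjoint S & free_clusters g].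
Proof.
have epi : e \in pi by rewrite pi_mem.
apply/bigcupP/not_disjointP => [[i _]|[i iS i_free]].
  rewrite mem_Greedy // blocked_upd !inE ffunE eqxx eE /= => /andP[iS e_free].
  by exists i => //; rewrite inE.
exists i => //; rewrite mem_Greedy // blocked_upd !inE ffunE eqxx eE iS /=.
by move: i_free; rewrite inE.
Qed.

Lemma sum_bad (f : clustering) :
  \sum_j (bad f j)%:R = (e \notin Greedy_union E pi f)%:R * (#|free_clusters f|%:R : R).
Proof.
rewrite /bad; case: (e \notin _) => /=; last by rewrite mul0r big1.
rewrite mul1r -sum1_card natr_sum [RHS]big_mkcond /=.
by apply: eq_bigr => j _; rewrite inE; case: (~~ _).
Qed.

(* Given the other edges, the clusters in which [e] is free are fixed, say [m]
   of them, and the bound is [m * (1 - p) ^+ m <= p^-1]. *)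
Lemma resampled_bad_le (g : clustering) :
  \sum_S subset_prob R c S * \sum_j (bad (ffun_upd g e S) j)%:R <= k%:R / c%:R.
Proof.
under eq_bigr do rewrite sum_bad mem_Greedy_union_upd negbK free_clusters_upd mulrA.
rewrite -mulr_suml subset_prob_disjoint mulrC -[k%:R / _]invf_div.
exact/geometric_mul_le_inv/p_itv.
Qed.

Lemma bad_prob_perm_eq i j :
  \sum_(f : clustering) cluster_prob R c E f * (bad f i)%:R =
  \sum_(f : clustering) cluster_prob R c E f * (bad f j)%:R.
Proof.
rewrite (reindex_inj (can_inj (fpermK (tperm i j)))) /=; apply: eq_bigr => f _.
by rewrite cluster_prob_fperm /bad Greedy_union_fperm cluster_fperm tpermL.
Qed.

(* By symmetry between the clusters, [k] times the probability that [e] is bad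
   for one cluster is the expected number of clusters for which it is bad. *)
Lemma bad_prob_le i :
  \sum_(f : clustering) cluster_prob R c E f * (bad f i)%:R <= c%:R^-1.
Proof.
have k_gt0 : 0 < k%:R :> R by rewrite ltr0n; apply: leq_trans c_le_k.
have expected_bad_count : \sum_(f : clustering)
    cluster_prob R c E f * \sum_j (bad f j)%:R <= k%:R / c%:R.
  under eq_bigr do rewrite cluster_prob_prod.
  apply: (expectation_le_resample (edge_law_ge0 R E c_gt0 c_le_k)
            (edge_law_sum1 R E k c) (a := e) finset.set0) => g.
  by rewrite /edge_law eE; exact: resampled_bad_le.
rewrite -(ler_pM2l k_gt0) mulrC; apply: le_trans expected_bad_count.
set L := \sum_(f : clustering) _.
have -> : L * k%:R = \sum_(j < k) L by rewrite sumr_const card_ord mulr_natr.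
under eq_bigr => j _ do rewrite /L (bad_prob_perm_eq i j).
by rewrite exchange_big; under eq_bigr do rewrite -mulr_sumr.
Qed.

End BadEdge.

Lemma opt_le (R : realType) (V : finType) (E : {set {set V}}) (w : {set V} -> R)
    (B : R) :
  0 <= B ->
  (forall M : {set {set V}}, M \subset E -> is_matching M -> weight w M <= B) ->
  opt E w <= B.
Proof.
move=> B_ge0 le_B; apply: (big_ind (fun x => x <= B)) => //.
- by move=> x y x_le y_le; rewrite ge_max x_le y_le.
- by move=> M /andP[]; exact: le_B.
Qed.

Lemma weight_alg_output_ge (R : realType) (V : finType) (E : {set {set V}})
    (w : {set V} -> R) (pi : seq {set V}) k (k_gt0 : (0 < k)%N)
    (f : {ffun {set V} -> {set 'I_k}}) :
  2 * weight w (Greedy (Greedy_union E pi f) pi)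
    + weight w (Greedy (Defs.cluster E f (Ordinal k_gt0)) pi)
  <= 3 * weight w (alg_output E w pi f).
Proof.
rewrite /alg_output (insubT (fun n => (n < k)%N) k_gt0) /=.
by case: ifPn; [|rewrite -ltNge]; lra.
Qed.

Section ExpectedWeight.
Variables (R : realType) (V : finType) (E : {set {set V}}) (w : {set V} -> R).
Variables (pi : seq {set V}) (k c : nat).
Hypotheses (E_simple : simple_graph E) (w_ge0 : forall e, e \in E -> 0 <= w e).
Hypotheses (pi_order : weight_order E w pi) (c_gt0 : (0 < c)%N) (c_le_k : (c <= k)%N).

Let k_gt0 : (0 < k)%N := leq_trans c_gt0 c_le_k.
Let pi_uniq : uniq pi.
Proof. by case/andP: pi_order => /perm_uniq -> _; exact: enum_uniq. Qed.
Let pi_mem : pi =i E.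
Proof. by case/andP: pi_order => /perm_mem eq_pi _ x; rewrite eq_pi mem_enum. Qed.
Let pi_sorted : sorted (fun a b => w b <= w a) pi.
Proof. by case/andP: pi_order. Qed.

Lemma expected_weight_ge0 : 0 <= expected_weight k c E w pi.
Proof.
apply: sumr_ge0 => f _; rewrite mulr_ge0 ?cluster_prob_ge0 //.
have := weight_alg_output_ge E w pi k_gt0 f.
have := weight_Greedy_ge0 pi_mem w_ge0 (Greedy_union E pi f).
have := weight_Greedy_ge0 pi_mem w_ge0 (Defs.cluster E f (Ordinal k_gt0)).
lra.
Qed.

Lemma matching_weight_le_expected (M : {set {set V}}) :
  M \subset E -> is_matching M ->
  weight w M - weight w M / c%:R <= 3 * expected_weight k c E w pi.
Proof.
move=> ME M_matching; set i0 := Ordinal k_gt0.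
pose loss f := \sum_(e in M) w e * (bad E pi e f i0)%:R.
have loss_mass : \sum_f cluster_prob R c E f * loss f <= weight w M / c%:R.
  rewrite /weight mulr_suml; under eq_bigr do rewrite mulr_sumr.
  rewrite exchange_big /=; apply: ler_sum => e eM.
  under eq_bigr do rewrite mulrCA.
  rewrite -mulr_sumr ler_wpM2l ?w_ge0 ?(subsetP ME) //.
  exact: (bad_prob_le R pi_uniq pi_mem c_gt0 c_le_k (subsetP ME _ eM)).
apply: le_trans (_ : _ <= \sum_f cluster_prob R c E f * (weight w M - loss f)) _.
  rewrite (eq_bigr (fun f => cluster_prob R c E f * weight w M
                             - cluster_prob R c E f * loss f)) => [|f _]; last first.
    by rewrite mulrBr.
  by rewrite sumrB -mulr_suml cluster_prob_sum1 mul1r lerD2l lerN2.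
rewrite /expected_weight mulr_sumr; apply: ler_sum => f _.
rewrite mulrCA ler_wpM2l ?cluster_prob_ge0 //.
apply: le_trans (weight_alg_output_ge E w pi k_gt0 f); rewrite lerBlDr.
apply: matching_weight_le_Greedy => //.
exact: (bigcup_sup i0).
Qed.

End ExpectedWeight.

Section Multiplicity.
Variable R : realType.

Definition multiplicity (eps : R) : nat :=
  (Num.trunc (8 * (1 + ln eps^-1) / eps)).+1.

Lemma multiplicity_bounds eps : 0 < eps < 1 ->
  8 * (1 + ln eps^-1) / eps < (multiplicity eps)%:R <= 8 * (1 + ln eps^-1) / eps + 1.
Proof.
case/andP=> eps_gt0 eps_lt1; have ln_gt0 : 0 < ln eps^-1 by rewrite ln_gt0 // invf_gt1.
have /truncn_itv/andP[le_trunc lt_trunc] : 0 <= 8 * (1 + ln eps^-1) / eps.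
  by rewrite divr_ge0 ?mulr_ge0 ?addr_ge0 // ltW.
by rewrite lt_trunc /multiplicity -natr1 lerD2r le_trunc.
Qed.

Lemma multiplicity_theta eps : 0 < eps < expR (-1) ->
  8 * (ln eps^-1 / eps) <= (multiplicity eps)%:R <= 17 * (ln eps^-1 / eps).
Proof.
case/andP=> eps_gt0 eps_small.
have eps_lt1 : eps < 1 by apply: (lt_trans eps_small); rewrite expR_lt1 ltrN10.
have ln_gt1 : 1 < ln eps^-1.
  rewrite -ltr_expR lnK ?posrE ?invr_gt0 // -[expR 1]invrK -expRN.
  by rewrite ltf_pV2 ?posrE ?invr_gt0 ?expR_gt0.
have inv_gt1 : 1 < eps^-1 by rewrite invf_gt1.
have /andP[] := multiplicity_bounds (introT andP (conj eps_gt0 eps_lt1)).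
rewrite !mulrA -[_ / eps]mulrA.
set L := ln eps^-1 in ln_gt1 *; set t := eps^-1 in inv_gt1 *.
move=> lo hi; apply/andP; split; first by apply: le_trans (ltW lo); nra.
by apply: le_trans hi _; nra.
Qed.

Lemma eps_multiplicity_ge eps : 0 < eps < 1 -> 8 <= eps * (multiplicity eps)%:R.
Proof.
move=> eps_itv; have /andP[eps_gt0 eps_lt1] := eps_itv.
have ln_gt0 : 0 < ln eps^-1 by rewrite ln_gt0 // invf_gt1.
have /andP[lo _] := multiplicity_bounds eps_itv.
rewrite -ler_pdivrMl //; apply: le_trans (ltW lo).
by rewrite mulrC ler_wpM2r ?invr_ge0 ?(ltW eps_gt0) //; lra.
Qed.

End Multiplicity.

Lemma ler_3Deps_mul (R : realFieldType) (eps c W X : R) :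
  0 < eps < 1 -> 8 <= eps * c -> 0 <= W -> W - W / c <= 3 * X -> W <= (3 + eps) * X.
Proof.
move=> /andP[eps_gt0 eps_lt1] eps_c W_ge0 loss_le.
have c_gt0 : 0 < c by nra.
have inv_c_le : c^-1 <= eps / 8.
  by rewrite -(ler_pM2r c_gt0) mulVf ?gt_eqF // mulrAC ler_pdivlMr // mul1r.
have loss_small : W / c <= W * (eps / 8) by exact: ler_wpM2l.
set Y := W / c in loss_le loss_small.
have loss_le_W8 : W * (eps / 8) <= W * (1 / 8) by apply: ler_wpM2l => //; lra.
have eps_ge0 := ltW eps_gt0.
have eps_loss_le : eps * (W - Y) <= eps * (3 * X) by apply: ler_wpM2l.
have eps_loss_ge : eps * (7 / 8 * W) <= eps * (W - Y) by apply: ler_wpM2l => //; lra.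
have epsW_ge0 : 0 <= eps * W by apply: mulr_ge0.
nra.
Qed.

Theorem theorem3p6 (R : realType) :
  exists (c : R -> nat) (C1 C2 eps0 : R),
    [/\ 0 < C1, 0 < C2, 0 < eps0 <= 1 &
    (forall eps : R, 0 < eps < eps0 ->
       C1 * (ln eps^-1 / eps) <= (c eps)%:R <= C2 * (ln eps^-1 / eps))] /\
    forall eps : R, 0 < eps < 1 ->
    forall (V : finType) (E : {set {set V}}) (w : {set V} -> R)
           (pi : seq {set V}) (k : nat),
      simple_graph E ->
      (forall e, e \in E -> 0 <= w e) ->
      weight_order E w pi ->
      (c eps <= k)%N ->
      opt E w <= (3 + eps) * expected_weight k (c eps) E w pi.
Proof.
exists (@multiplicity R), 8, 17, (expR (-1)); split.
  split=> //; last exact: multiplicity_theta.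
  by rewrite expR_gt0 expR_le1 lerN10.
move=> eps eps_itv V E w pi k E_simple w_ge0 pi_order c_le_k.
have c_gt0 : (0 < multiplicity eps)%N by [].
apply: opt_le => [|M ME M_matching].
  by rewrite mulr_ge0 ?expected_weight_ge0 //; case/andP: eps_itv => *; lra.
apply: (ler_3Deps_mul eps_itv (eps_multiplicity_ge eps_itv)).
  by apply: sumr_ge0 => e /(subsetP ME) /w_ge0.
exact: matching_weight_le_expected.
Qed.
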